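(* Suppose both parties' preferences are single-peaked (as defined in the context). Let \((s,t)\) be a pure-strategy Nash equilibrium with \(t<s\). Then the election is tied at \((s,t)\), that is \(g(s,t)=T\), and \[ t<\tau_A<\tau_B<s. \]
   Context: Policy space: \(X=\{x_j:j\in I\}\) with \(x_j<x_{j+1}\), where \(I\subseteq\mathbb Z\) is an interval of integers (so \(X\) is finite or countably infinite and linearly ordered). Two parties \(A\) and \(B\) have ideal points \(\tau_A=x_p\) and \(\tau_B=x_q\) with \(p<q\). Each party \(i\in\{A,B\}\) has a weak preference order \(\succeq_i\) over \(X\) with unique ideal point \(\tau_i\); \(x\succ_i y\) means \(x\succeq_i y\) and not \(y\succeq_i x\). Single-peakedness of party preferences: for each party \(i\), if \(x_a<x_b\le\tau_i\) then \(x_b\succ_i x_a\), and if \(\tau_i\le x_b<x_a\) then \(x_b\succ_i x_a\). Each party chooses a platform in \(X\); party \(A\) chooses \(s\), party \(B\) chooses \(t\), giving platform profile \((s,t)\). Electorate: a finite set \(V\) of voters, each \(v\) with ideal point \(\theta_v\in X\), strict single-peaked preferences over \(X\) with peak \(\theta_v\), and an attraction interval \(A_v\subseteq X\) (an interval in the policy order containing \(\theta_v\)). Given \((s,t)\), voter \(v\) is active if \(s\in A_v\) or \(t\in A_v\); an active voter votes for the platform she strictly prefers and abstains if indifferent (in particular if \(s=t\)). Let \(N_A(s,t)\) (resp. \(N_B(s,t)\)) be the number of active voters strictly preferring \(s\) to \(t\) (resp. \(t\) to \(s\)). The outcome \(g(s,t)\in\{A,B,T\}\) is \(A\) if \(N_A>N_B\),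 \(B\) if \(N_B>N_A\), and \(T\) (tie) if equal; in particular \(g(s,s)=T\) for all \(s\). Party objectives (lexicographic): each party ranks Win \(\succ\) Tie \(\succ\) Lose (for \(A\), outcome \(A\) is a win and \(B\) a loss; symmetrically for \(B\)); among profiles with the same electoral outcome, party \(A\) ranks by its own platform \(s\) using \(\succeq_A\), and party \(B\) ranks by its own platform \(t\) using \(\succeq_B\). A pure-strategy Nash equilibrium is a profile \((s,t)\in X\times X\) at which neither party has a strictly profitable unilateral deviation under this ordering. *)

(* Policy space X = {x_j : j in I} is represented by the index
   set I : pred int (order-isomorphic, preferences depend only on the order). *)
From HB Require Import structures.
From mathcomp Require Import all_boot all_order all_algebra.
Set Implicit Arguments. Unset Strict Implicit. Unset Printing Implicit Defensive.
Import Order.TTheory GRing.Theory Num.Theory.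
Local Open Scope ring_scope.

Definition int_interval (I : pred int) : Prop :=
  forall a b c : int, I a -> I b -> a <= c <= b -> I c.

Definition strictly (R : rel int) (x y : int) : bool := R x y && ~~ R y x.

Definition weak_order (I : pred int) (R : rel int) : Prop :=
  (forall x y, I x -> I y -> R x y || R y x) /\
  (forall x y z, I x -> I y -> I z -> R x y -> R y z -> R x z).

Definition unique_ideal (I : pred int) (R : rel int) (tau : int) : Prop :=
  I tau /\ (forall x, I x -> R tau x) /\
  (forall x, I x -> (forall y, I y -> R x y) -> x = tau).

Definition party_single_peaked (I : pred int) (R : rel int) (tau : int) : Prop :=
  forall a b, I a -> I b ->
    ((a < b <= tau) -> strictly R b a) /\ ((tau <= b < a) -> strictly R b a).

(* strict single-peaked voter preference P (P x y : x strictly preferred to y)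
   with peak theta: a strict linear order on X, single-peaked at theta *)
Definition voter_strict_single_peaked (I : pred int) (P : rel int) (theta : int)
  : Prop :=
  I theta /\
  (forall x, I x -> ~~ P x x) /\
  (forall x y z, I x -> I y -> I z -> P x y -> P y z -> P x z) /\
  (forall x y, I x -> I y -> x != y -> P x y || P y x) /\
  (forall a b, I a -> I b ->
    ((a < b <= theta) -> P b a) /\ ((theta <= b < a) -> P b a)).

Definition attraction_interval (I : pred int) (A : pred int) (theta : int) : Prop :=
  (forall x, A x -> I x) /\
  (forall a b c, A a -> A b -> a <= c <= b -> A c) /\ A theta.

Section Election.
Variables (V : finType) (P : V -> rel int) (Att : V -> pred int).

Definition active (s t : int) (v : V) : bool := Att v s || Att v t.

Definition N_A (s t : int) : nat := #|[set v | active s t v && P v s t]|.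
Definition N_B (s t : int) : nat := #|[set v | active s t v && P v t s]|.

Inductive outcome := WinA | WinB | Tie.

Definition g (s t : int) : outcome :=
  if (N_B s t < N_A s t)%N then WinA
  else if (N_A s t < N_B s t)%N then WinB else Tie.

Definition rankA (o : outcome) : nat :=
  match o with WinA => 2 | Tie => 1 | WinB => 0 end.
Definition rankB (o : outcome) : nat :=
  match o with WinB => 2 | Tie => 1 | WinA => 0 end.

Definition nash (I : pred int) (RA RB : rel int) (s t : int) : Prop :=
  I s /\ I t /\
  (forall s', I s' ->
     ~ ((rankA (g s t) < rankA (g s' t))%N \/
        (rankA (g s' t) = rankA (g s t) /\ strictly RA s' s))) /\
  (forall t', I t' ->
     ~ ((rankB (g s t) < rankB (g s t'))%N \/
        (rankB (g s t') = rankB (g s t) /\ strictly RB t' t))).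
End Election.

From HB Require Import structures.
From mathcomp Require Import all_boot all_order all_algebra.
Set Implicit Arguments. Unset Strict Implicit. Unset Printing Implicit Defensive.
Import Order.TTheory GRing.Theory Num.Theory.
Local Open Scope ring_scope.

(* Each party can copy its opponent's platform, which forces a tie. Hence no
   party loses in equilibrium, so the election is tied, and then copying is
   still a deviation to an equally good outcome: it must not bring a party's
   platform closer to its ideal point. With t < s, single-peakedness then
   rules out p <= t and s <= q. *)

Lemma g_diag (V : finType) (P : V -> rel int) (Att : V -> pred int) (x : int) :
  g P Att x x = Tie.
Proof. by rewrite /g ltnn. Qed.

Section NashEquilibrium.
Variables (V : finType) (P : V -> rel int) (Att : V -> pred int).
Variables (I : pred int) (RA RB : rel int) (s t : int).
Hypothesis eq_st : nash P Att I RA RB s t.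

Lemma nash_tie : g P Att s t = Tie.
Proof.
case: eq_st => Is [It [devA devB]].
case E: (g P Att s t) => //; exfalso.
- by apply: (devB s Is); left; rewrite g_diag E.
- by apply: (devA t It); left; rewrite g_diag E.
Qed.

Lemma nash_copyA : ~ strictly RA t s.
Proof.
case: eq_st => _ [It [devA _]] prefA.
by apply: (devA t It); right; rewrite g_diag nash_tie.
Qed.

Lemma nash_copyB : ~ strictly RB s t.
Proof.
case: eq_st => Is [_ [_ devB]] prefB.
by apply: (devB s Is); right; rewrite g_diag nash_tie.
Qed.

End NashEquilibrium.

Theorem proposition1
  (I : pred int) (p q : int) (RA RB : rel int)
  (V : finType) (theta : V -> int) (P : V -> rel int) (Att : V -> pred int)
  (s t : int) :
  int_interval I -> I p -> I q -> p < q ->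
  weak_order I RA -> unique_ideal I RA p -> party_single_peaked I RA p ->
  weak_order I RB -> unique_ideal I RB q -> party_single_peaked I RB q ->
  (forall v, voter_strict_single_peaked I (P v) (theta v)) ->
  (forall v, attraction_interval I (Att v) (theta v)) ->
  nash P Att I RA RB s t -> t < s ->
  g P Att s t = Tie /\ t < p /\ p < q /\ q < s.
Proof.
move=> _ _ _ lt_pq _ _ spA _ _ spB _ _ eq_st lt_ts.
have [Is [It _]] := eq_st.
split; first exact: nash_tie eq_st.
split; last split=> //.
- rewrite ltNge; apply/negP => le_pt; apply: (nash_copyA eq_st).
  by apply: (spA s t Is It).2; rewrite le_pt lt_ts.
- rewrite ltNge; apply/negP => le_sq; apply: (nash_copyB eq_st).
  by apply: (spB t s It Is).1; rewrite lt_ts le_sq.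
Qed.
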